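(* For any $n\in\mathbb{N}$, the monoids $\mathrm{rps}_n$ and $\mathrm{lps}_n$ have word problem solvable in quadratic time.
   Context: Let $\mathcal{A}_n=\{1<2<\cdots<n\}$. An lPS tableau is a finite (possibly empty) sequence of nonempty bottom-justified columns of boxes filled with positive integers, such that the entries of each column are strictly decreasing from top to bottom and the bottom entries of the columns form a weakly increasing sequence from left to right. An rPS tableau is defined in the same way but with columns weakly decreasing from top to bottom and the bottom row strictly increasing from left to right. Right insertion of a symbol $a$ into an lPS tableau $B$: if $a$ is greater than or equal to every entry of the bottom row, append a new column consisting of $a$ at the right end; otherwise, let $z$ be the leftmost bottom-row entry with $z>a$ and put $a$ in a new box at the bottom of the column of $z$ (the previous entries of that column move up one box). Right insertion into an rPS tableau is the same except that a new column is created iff $a$ is strictly greater than every bottom-row entry, and otherwise $z$ is the leftmost bottom-row entry with $z\geq a$. For $w=w_1\cdots w_k$, $\mathfrak{R}_\ell(w)$ (resp. $\mathfrak{R}_r(w)$) is obtained by starting with the empty lPS (resp. rPS) tableau and right-inserting $w_1,\dots,w_k$ in order. The monoid $\mathrm{lps}_n$ (resp. $\mathrm{rps}_n$) is the quotient of $\mathcal{A}_n^*$ by the congruence $u\equiv v\iff\mathfrak{R}_\ell(u)=\mathfrak{R}_\ell(v)$ (resp. $\mathfrak{R}_r(u)=\mathfrak{R}_r(v)$). The word problem (with respect to the generating set $\mathcal{A}_n$) asks, given $u,v\in\mathcal{A}_n^*$, whether they represent the same element; time is measured in $|u|+|v|$. *)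

From mathcomp Require Import all_boot.
Set Implicit Arguments.
Unset Strict Implicit.
Unset Printing Implicit Defensive.

(* Letters of A_n = {1<...<n} are represented by 'I_n (i : 'I_n stands  *)
(* for the letter i+1; the order is preserved).                          *)
(* A tableau is a sequence of columns (left to right); each column is    *)
(* listed from its BOTTOM box upwards, so the bottom entry is the head.  *)

Section PS.
Variable n : nat.

Fixpoint ins_l (a : 'I_n) (B : seq (seq 'I_n)) : seq (seq 'I_n) :=
  match B with
  | [::] => [:: [:: a]]
  | col :: B' => if a < head a col then (a :: col) :: B' else col :: ins_l a B'
  end.

Fixpoint ins_r (a : 'I_n) (B : seq (seq 'I_n)) : seq (seq 'I_n) :=
  match B with
  | [::] => [:: [:: a]]
  | col :: B' => if (col != [::]) && (a <= head a col)
                 then (a :: col) :: B' else col :: ins_r a B'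
  end.

Definition Rl (w : seq 'I_n) : seq (seq 'I_n) := foldl (fun B a => ins_l a B) [::] w.
Definition Rr (w : seq 'I_n) : seq (seq 'I_n) := foldl (fun B a => ins_r a B) [::] w.

(* u and v represent the same element of lps_n (resp. rps_n) *)
Definition lps_eq (u v : seq 'I_n) : bool := Rl u == Rl v.
Definition rps_eq (u v : seq 'I_n) : bool := Rr u == Rr v.

End PS.

Inductive move := MoveL | MoveR | MoveN.

Record TM (In : Type) : Type := MkTM {
  tm_state : finType;
  tm_sym : finType;
  tm_blank : tm_sym;
  tm_enc : In -> tm_sym;
  tm_start : tm_state;
  tm_halt : pred tm_state;
  tm_acc : pred tm_state;
  tm_delta : tm_state -> tm_sym -> tm_state * tm_sym * move }.
Arguments tm_halt {In} t _.
Arguments tm_acc {In} t _.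
Arguments tm_delta {In} t _ _.
Arguments tm_enc {In} t _.
Arguments tm_blank {In} t.
Arguments tm_start {In} t.

Section TMsem.
Variables (In : Type) (M : TM In).

(* configuration: state, reversed left part, scanned symbol, right part;
   all cells outside are blank *)
Definition config : Type :=
  (tm_state M * (seq (tm_sym M) * tm_sym M * seq (tm_sym M)))%type.

Definition init_config (w : seq In) : config :=
  (tm_start M,
   match w with
   | [::] => ([::], tm_blank M, [::])
   | a :: w' => ([::], tm_enc M a, map (tm_enc M) w')
   end).

Definition tm_step (c : config) : config :=
  let: (q, (l, x, r)) := c in
  if tm_halt M q then c else
  let: (q', y, m) := tm_delta M q x in
  match m with
  | MoveN => (q', (l, y, r))
  | MoveL => match l with
             | [::] => (q', ([::], tm_blank M, y :: r))
             | z :: l' => (q', (l', z, y :: r))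
             end
  | MoveR => match r with
             | [::] => (q', (y :: l, tm_blank M, [::]))
             | z :: r' => (q', (y :: l, z, r'))
             end
  end.

Definition run (t : nat) (w : seq In) : config := iter t tm_step (init_config w).

Definition decides_within (w : seq In) (t : nat) (b : bool) : Prop :=
  tm_halt M (run t w).1 /\ tm_acc M (run t w).1 = b.

End TMsem.

Definition word_problem_quadratic (n : nat) (eqw : seq 'I_n -> seq 'I_n -> bool) : Prop :=
  exists (M : TM (option 'I_n)) (c : nat),
    forall u v : seq 'I_n,
      decides_within M (map Some u ++ None :: map Some v)
                     (c * (size u + size v).+1 ^ 2) (eqw u v).

From mathcomp Require Import all_boot zify.
Set Implicit Arguments.
Unset Strict Implicit.
Unset Printing Implicit Defensive.

(* Right insertion into lPS and rPS tableaux are the instances [P = <] and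
   [P = <=] of one scheme [ps_tab P].  A single-tape machine decides
   [ps_tab P u == ps_tab P v] on input u#v in passes over a work area of width
   |u|+|v|+1 with three tracks: the input, and the tableaux of the prefixes of u
   and of v inserted so far, written column after column and padded with blanks.
   In one left-to-right pass a finite-state transducer marks the next letter of u
   and of v as read, inserts the letters read in the previous pass (an insertion
   only shifts the tail of the encoding by one cell) and compares the two new
   tableau tracks; the head then walks back.  After max(|u|,|v|)+1 passes the
   comparison is the answer, and each pass costs O(|u|+|v|) steps. *)

Lemma take_drop_cons (T : Type) (w : seq T) k a r :
  drop k w = a :: r -> take k.+1 w = rcons (take k w) a.
Proof. by move=> E; rewrite -addn1 takeD E /= take0 cats1. Qed.

Lemma ohead_drop_eqNone (T : eqType) (w : seq T) k : (ohead (drop k w) == None) = (size w <= k).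
Proof. by rewrite -subn_eq0 -size_drop; case: (drop k w). Qed.

Lemma zip_nseqr (X Y : Type) (xs : seq X) (y : Y) :
  zip xs (nseq (size xs) y) = [seq (x, y) | x <- xs].
Proof. by elim: xs => //= x xs ->. Qed.

Lemma all_zip_snd (X Y : Type) (t : pred Y) (xs : seq X) ys :
  size xs = size ys -> all (fun p => t p.2) (zip xs ys) = all t ys.
Proof. by elim: xs ys => [|x xs IH] [|y ys] //= [/IH ->]. Qed.

Lemma all_zip_eq (X : eqType) (xs ys : seq X) :
  size xs = size ys -> all (fun p => p.1 == p.2) (zip xs ys) = (xs == ys).
Proof. by elim: xs ys => [|x xs IH] [|y ys] //= [/IH ->]; rewrite eqseq_cons. Qed.

Definition pad (X : Type) (K : nat) (T : seq X) : seq (option X) :=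
  map Some T ++ nseq (K - size T) None.

Lemma size_pad (X : Type) K (T : seq X) : size T <= K -> size (pad K T) = K.
Proof. by move=> le_TK; rewrite size_cat size_map size_nseq subnKC. Qed.

Lemma padK (X : Type) K : cancel (@pad X K) (pmap id).
Proof.
move=> T; rewrite pmap_cat (@map_pK _ _ id Some (fun _ => erefl)).
by elim: (K - _) => [|m] /=; rewrite ?cats0.
Qed.

Fixpoint sweep (S A : Type) (f : S -> A -> A * S) (s : S) (xs : seq A) : seq A * S :=
  if xs is x :: xs' then
    let p := f s x in let q := sweep f p.2 xs' in (p.1 :: q.1, q.2)
  else ([::], s).

Section Sweep.
Variables (S A : Type) (f : S -> A -> A * S).

Lemma size_sweep s xs : size (sweep f s xs).1 = size xs.
Proof. by elim: xs s => //= x xs IH s; rewrite IH. Qed.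

Lemma sweep_cat s xs ys xs' s1 ys' s2 :
  sweep f s xs = (xs', s1) -> sweep f s1 ys = (ys', s2) ->
  sweep f s (xs ++ ys) = (xs' ++ ys', s2).
Proof.
elim: xs s xs' s1 => [|x xs IH] s xs' s1 /=; first by case=> <- <-.
case E: (sweep f _ xs) => [xs1 t1] [<- <-] Eys.
by rewrite (IH _ _ _ E Eys).
Qed.

Definition monitor (t : pred A) (s : S * bool) (a : A) : A * (S * bool) :=
  let p := f s.1 a in (p.1, (p.2, s.2 && t p.1)).

Lemma sweep_monitor t s e xs xs' s' :
  sweep f s xs = (xs', s') -> sweep (monitor t) (s, e) xs = (xs', (s', e && all t xs')).
Proof.
elim: xs s e xs' s' => [|x xs IH] s e xs' s' /=; first by case=> <- <-; rewrite andbT.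
case E: (sweep f _ xs) => [xs1 t1] [<- <-].
by rewrite (IH _ _ _ _ E) /= andbA.
Qed.

End Sweep.

Lemma sweep_fixed (S : Type) (A : eqType) (f : S -> A -> A * S) s xs :
  {in xs, forall x, f s x = (x, s)} -> sweep f s xs = (xs, s).
Proof.
elim: xs => //= x xs IH fix_s; rewrite fix_s ?mem_head //= IH // => y xs_y.
by rewrite fix_s // inE xs_y orbT.
Qed.

Definition par (S1 S2 A1 A2 : Type) (f : S1 -> A1 -> A1 * S1) (g : S2 -> A2 -> A2 * S2)
    (s : S1 * S2) (a : A1 * A2) : (A1 * A2) * (S1 * S2) :=
  let p := f s.1 a.1 in let q := g s.2 a.2 in ((p.1, q.1), (p.2, q.2)).

Lemma sweep_par (S1 S2 A1 A2 : Type) (f : S1 -> A1 -> A1 * S1) (g : S2 -> A2 -> A2 * S2)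
    s1 s2 xs ys xs' s1' ys' s2' :
  size xs = size ys -> sweep f s1 xs = (xs', s1') -> sweep g s2 ys = (ys', s2') ->
  sweep (par f g) (s1, s2) (zip xs ys) = (zip xs' ys', (s1', s2')).
Proof.
elim: xs ys s1 s2 xs' ys' s1' s2' => [|x xs IH] [|y ys] //= s1 s2 xs' ys' s1' s2';
  first by move=> _ [<- <-] [<- <-].
case Ex: (sweep f _ xs) => [xs1 t1]; case Ey: (sweep g _ ys) => [ys1 t2].
by move=> [sz] [<- <-] [<- <-]; rewrite (IH _ _ _ _ _ _ _ sz Ex Ey).
Qed.

Section SweepingMachine.
Variables (In : Type) (S L A : finType).
Variables (f : S -> A -> A * S) (start : L -> S) (verdict : S -> L + bool).
Variables (enc : In -> A) (l0 : L).

Definition halted (q : (S + L) + bool) : bool := if q is inr _ then true else false.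

(* [inl (inl s)]: sweeping right, the transducer [f] being in state [s];
   [inl (inr l)]: walking back to the left end, [l] to be handed to the next pass;
   [inr b]: halted with answer [b].  A blank cell delimits each end of the work area. *)
Definition sweeping_delta (q : (S + L) + bool) (x : option A) :
    ((S + L) + bool) * option A * move :=
  match q, x with
  | inl (inl s), Some a => (inl (inl (f s a).2), Some (f s a).1, MoveR)
  | inl (inl s), None =>
      match verdict s with
      | inl l => (inl (inr l), None, MoveL)
      | inr b => (inr b, None, MoveN)
      end
  | inl (inr l), Some _ => (q, x, MoveL)
  | inl (inr l), None => (inl (inl (start l)), None, MoveR)
  | inr _, _ => (q, x, MoveN)
  end.

Definition sweeping_machine : TM In :=
  @MkTM In ((S + L) + bool)%type (option A) None (Some \o enc) (inl (inr l0)) halted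
    (fun q => if q is inr b then b else false) sweeping_delta.

Local Notation step := (@tm_step _ sweeping_machine).

(* The head scans the first cell of [xs]; [l] lists the cells to its left, nearest first. *)
Definition tape (l xs : seq (option A)) : seq (option A) * option A * seq (option A) :=
  (l, head None xs, behead xs).

Definition round_config (l : L) (cs : seq A) (m : nat) : config sweeping_machine :=
  (inl (inl (start l)), tape [:: None] (map Some cs ++ nseq m None)).

Lemma step_sweep s a l xs :
  step (inl (inl s), tape l (Some a :: xs)) =
  (inl (inl (f s a).2), tape (Some (f s a).1 :: l) xs).
Proof. by case: xs. Qed.

Lemma step_verdict_next s l' z l m :
  verdict s = inl l' ->
  step (inl (inl s), tape (z :: l) (nseq m None)) =
  (inl (inr l'), tape l (z :: nseq m.-1.+1 None)).
Proof. by case: m => [|m] /= ->. Qed.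

Lemma step_verdict_stop s b l m :
  verdict s = inr b -> step (inl (inl s), tape l (nseq m None)) = (inr b, tape l (nseq m None)).
Proof. by case: m => [|m] /= ->. Qed.

Lemma step_return l' z l a xs :
  step (inl (inr l'), tape (z :: l) (Some a :: xs)) = (inl (inr l'), tape l (z :: Some a :: xs)).
Proof. by []. Qed.

Lemma step_turn l' xs :
  step (inl (inr l'), tape [::] (None :: xs)) = (inl (inl (start l')), tape [:: None] xs).
Proof. by case: xs. Qed.

Lemma iter_sweep s cs l r :
  iter (size cs) step (inl (inl s), tape l (map Some cs ++ r)) =
  (inl (inl (sweep f s cs).2), tape (rev (map Some (sweep f s cs).1) ++ l) r).
Proof.
elim: cs s l => // c cs IH s l.
by rewrite [size _]/= iterSr [_ ++ r]/= step_sweep IH rev_cons cat_rcons.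
Qed.

Lemma iter_return l' cs a z l xs :
  iter (size cs).+1 step (inl (inr l'), tape (rev (map Some cs) ++ z :: l) (Some a :: xs)) =
  (inl (inr l'), tape l (z :: map Some cs ++ Some a :: xs)).
Proof.
elim/last_ind: cs a xs => // cs c IH a xs.
by rewrite size_rcons iterSr map_rcons rev_rcons cat_cons step_return IH cat_rcons.
Qed.

Lemma iter_halted t c : halted c.1 -> iter t step c = c.
Proof. by case: c => [[//|b] [[l x] r]] _; elim: t => //= t ->. Qed.

Lemma iter_round_next l (cs : seq A) m l' :
  0 < size cs -> verdict (sweep f (start l) cs).2 = inl l' ->
  iter (2 * size cs + 2) step (round_config l cs m) =
  round_config l' (sweep f (start l) cs).1 m.-1.+1.
Proof.
move=> cs_gt0; case E: (sweep f (start l) cs) => [cs' s] /= Ev.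
have := size_sweep f (start l) cs; rewrite E /=.
case/lastP: cs' E => [|ys y] E; first by move=> size0; rewrite -size0 in cs_gt0.
rewrite size_rcons => size_ys.
have -> : 2 * size cs + 2 = ((size ys).+1 + (size cs).+1).+1 by rewrite -size_ys; lia.
rewrite /round_config iterS iterD [iter (size cs).+1 _ _]iterS iter_sweep E.
rewrite map_rcons rev_rcons cat_cons (step_verdict_next _ _ _ Ev).
by rewrite iter_return step_turn cat_rcons.
Qed.

Lemma iter_round_stop l (cs : seq A) m b :
  verdict (sweep f (start l) cs).2 = inr b ->
  (iter (size cs).+1 step (round_config l cs m)).1 = inr b.
Proof. by move=> Ev; rewrite /round_config iterS iter_sweep (step_verdict_stop _ _ Ev). Qed.

Fixpoint rounds (k : nat) (l : L) (cs : seq A) : option bool :=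
  if k is k'.+1 then
    let q := sweep f (start l) cs in
    match verdict q.2 with inl l' => rounds k' l' q.1 | inr b => Some b end
  else None.

Lemma rounds_stop k l cs b :
  verdict (sweep f (start l) cs).2 = inr b -> rounds k.+1 l cs = Some b.
Proof. by move=> /= ->. Qed.

Lemma rounds_next k l cs l' :
  verdict (sweep f (start l) cs).2 = inl l' ->
  rounds k.+1 l cs = rounds k l' (sweep f (start l) cs).1.
Proof. by move=> /= ->. Qed.

Lemma rounds_halt k l (cs : seq A) m b t :
  0 < size cs -> rounds k l cs = Some b -> k * (2 * size cs + 2) <= t ->
  (iter t step (round_config l cs m)).1 = inr b.
Proof.
elim: k l cs m t => // k IH l cs m t cs_gt0 /= + t_ge; rewrite mulSn in t_ge.
case Ev: (verdict _) => [l'|b'] => [next_b|[<-]].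
- have size_cs' := size_sweep f (start l) cs.
  have le_t : 2 * size cs + 2 <= t := leq_trans (leq_addr _ _) t_ge.
  rewrite -(subnK le_t) iterD (iter_round_next _ cs_gt0 Ev).
  by apply: IH next_b _; rewrite size_cs' // leq_subRL.
- have le_t : (size cs).+1 <= t by apply: leq_trans (leq_trans (leq_addr _ _) t_ge); lia.
  have stop := @iter_round_stop l cs m _ Ev.
  by rewrite -(subnK le_t) iterD iter_halted ?stop.
Qed.

Theorem sweeping_machine_decides w k b t :
  0 < size w -> rounds k l0 (map enc w) = Some b -> k * (2 * size w + 2) + 2 <= t ->
  decides_within sweeping_machine w t b.
Proof.
move=> w_gt0 w_rounds t_ge.
have init : iter 2 step (init_config sweeping_machine w) = round_config l0 (map enc w) 0.
  by case: w w_gt0 {w_rounds t_ge} => // a w _; rewrite /round_config cats0 -map_comp.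
have halt := @rounds_halt k l0 (map enc w) 0 b (t - 2); rewrite size_map in halt.
have le2_t : 2 <= t by lia.
by rewrite /decides_within /run -(subnK le2_t) iterD init halt ?size_map //; lia.
Qed.

End SweepingMachine.

Section PatienceSorting.
Variables (n : nat) (P : rel 'I_n).

Fixpoint ps_ins (a : 'I_n) (B : seq (seq 'I_n)) : seq (seq 'I_n) :=
  if B is col :: B' then
    if (col != [::]) && P a (head a col) then (a :: col) :: B' else col :: ps_ins a B'
  else [:: [:: a]].

Definition ps_tab (w : seq 'I_n) : seq (seq 'I_n) := foldl (fun B a => ps_ins a B) [::] w.

Lemma ps_tab_rcons w a : ps_tab (rcons w a) = ps_ins a (ps_tab w).
Proof. exact: foldl_rcons. Qed.

Lemma size_flatten_ps_ins a B : size (flatten (ps_ins a B)) = (size (flatten B)).+1.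
Proof. by elim: B => //= col B IH; case: ifP => _; rewrite /= ?size_cat ?IH ?addnS. Qed.

Lemma size_flatten_ps_tab w : size (flatten (ps_tab w)) = size w.
Proof.
by elim/last_ind: w => // w a IH; rewrite ps_tab_rcons size_flatten_ps_ins IH size_rcons.
Qed.

Lemma ps_ins_nonempty a B : all (predC1 [::]) B -> all (predC1 [::]) (ps_ins a B).
Proof.
by elim: B => //= col B IH /andP[col_nz all_B]; case: ifP => _; rewrite /= ?col_nz ?all_B ?IH.
Qed.

Lemma ps_tab_nonempty w : all (predC1 [::]) (ps_tab w).
Proof. by elim/last_ind: w => // w a IH; rewrite ps_tab_rcons ps_ins_nonempty. Qed.

Definition item : Type := 'I_n * bool.

Definition enc_col (col : seq 'I_n) : seq item :=
  if col is x :: c then (x, true) :: [seq (y, false) | y <- c] else [::].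

Definition enc_tab (B : seq (seq 'I_n)) : seq item := flatten (map enc_col B).

Fixpoint dec_tab (T : seq item) : seq 'I_n * seq (seq 'I_n) :=
  if T is (x, b) :: T' then
    let: (c, B) := dec_tab T' in if b then ([::], (x :: c) :: B) else (x :: c, B)
  else ([::], [::]).

Lemma dec_tab_cat_col c T :
  dec_tab ([seq (y, false) | y <- c] ++ T) = (c ++ (dec_tab T).1, (dec_tab T).2).
Proof. by elim: c => [|y c IH] /=; [case: dec_tab | rewrite IH]. Qed.

Lemma enc_tabK B : all (predC1 [::]) B -> dec_tab (enc_tab B) = ([::], B).
Proof.
elim: B => //= -[//|x c] B IH /andP[_ /IH dec_B].
by rewrite /enc_tab /= -/(enc_tab B) dec_tab_cat_col dec_B cats0.
Qed.

Lemma size_enc_tab B : size (enc_tab B) = size (flatten B).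
Proof.
by elim: B => //= -[|x c] B IH; rewrite /enc_tab /= -/(enc_tab B) ?size_cat ?size_map IH.
Qed.

Lemma eq_pad_enc_tab K B1 B2 :
  all (predC1 [::]) B1 -> all (predC1 [::]) B2 ->
  (pad K (enc_tab B1) == pad K (enc_tab B2)) = (B1 == B2).
Proof.
move=> nz_B1 nz_B2; apply/eqP/eqP => [/(can_inj (@padK _ K)) E | -> //].
by have := enc_tabK nz_B1; rewrite E enc_tabK // => -[].
Qed.

(* [Some (inl a)]: looking for the column that receives [a];
   [Some (inr it)]: shifting the encoding one cell right, [it] being the item
   pushed out of the previous cell. *)
Definition ins_state : Type := option ('I_n + item).

Definition ins_step (s : ins_state) (x : option item) : option item * ins_state :=
  match s, x with
  | Some (inl a), None => (Some (a, true), None)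
  | Some (inl a), Some (y, true) =>
      if P a y then (Some (a, true), Some (inr (y, false))) else (x, s)
  | Some (inr it), _ => (Some it, omap inr x)
  | _, _ => (x, s)
  end.

Lemma sweep_ins_shift it ys m :
  sweep ins_step (Some (inr it)) (map Some ys ++ None :: nseq m None) =
  (map Some (it :: ys) ++ nseq m None, None).
Proof.
elim: ys it => [|y ys IH] it /=; last by rewrite IH.
by rewrite sweep_fixed // => x /nseqP[->].
Qed.

Lemma sweep_ins a B m :
  sweep ins_step (Some (inl a)) (map Some (enc_tab B) ++ None :: nseq m None) =
  (map Some (enc_tab (ps_ins a B)) ++ nseq m None, None).
Proof.
elim: B => [|[|x c] B IH] /=; first by rewrite sweep_fixed // => y /nseqP[->].
  by rewrite /enc_tab /= -/(enc_tab B) IH.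
rewrite /enc_tab /= -/(enc_tab B); case: (P a x) => /=.
  by rewrite sweep_ins_shift.
have skip : sweep ins_step (Some (inl a)) (map Some [seq (y, false) | y <- c]) =
              (map Some [seq (y, false) | y <- c], Some (inl a)).
  by apply: sweep_fixed => _ /mapP[_ /mapP[y _ ->] ->].
by rewrite map_cat -catA (sweep_cat skip IH) /= map_cat -catA.
Qed.

Lemma sweep_ins_pad a B K :
  size (flatten B) < K ->
  sweep ins_step (Some (inl a)) (pad K (enc_tab B)) = (pad K (enc_tab (ps_ins a B)), None).
Proof.
rewrite /pad !size_enc_tab size_flatten_ps_ins => lt_BK.
by rewrite -(subnSK lt_BK) sweep_ins.
Qed.

End PatienceSorting.

Section ReadingTransducer.
Variable n : nat.

(* Input track: [Some x] is the unread input symbol [x] (the separator being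
   [x = None]); [None] is a letter already read. *)
Definition read (w : seq 'I_n) (k : nat) : seq (option (option 'I_n)) :=
  [seq None | _ <- take k w] ++ [seq Some (Some a) | a <- drop k w].

Lemma size_read w k : size (read w k) = size w.
Proof. by rewrite size_cat !size_map -size_cat cat_take_drop. Qed.

Lemma separator_notin_read w k : Some None \notin read w k.
Proof. by rewrite mem_cat negb_or; apply/andP; split; apply/mapP => -[]. Qed.

Definition pick (p : option 'I_n) (x : option (option 'I_n)) :=
  if (p, x) is (None, Some (Some a)) then (None, Some a) else (x, p).

Lemma sweep_pick w k : sweep pick None (read w k) = (read w k.+1, ohead (drop k w)).
Proof.
have fixed p xs : {in xs, forall x, pick p x = (x, p)} -> sweep pick p xs = (xs, p).
  exact: sweep_fixed.
rewrite /read; case E: (drop k w) => [|a r] /=.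
  have le_wk : size w <= k by rewrite -subn_eq0 -size_drop E.
  rewrite !take_oversize ?drop_oversize ?(leqW le_wk) //= cats0.
  by rewrite fixed // => _ /mapP[? _ ->].
have -> : drop k.+1 w = r by rewrite -add1n -drop_drop E drop1.
rewrite (take_drop_cons E) map_rcons -cats1 -catA.
apply: sweep_cat; first by apply: fixed => _ /mapP[? _ ->].
by rewrite /= fixed // => _ /mapP[? _ ->].
Qed.

Definition pick_uv (s : bool * option 'I_n * option 'I_n) (x : option (option 'I_n)) :=
  let: (after_sep, pu, pv) := s in
  if x == Some None then (x, (true, pu, pv))
  else if after_sep then let q := pick pv x in (q.1, (true, pu, q.2))
  else let q := pick pu x in (q.1, (false, q.2, pv)).

Lemma sweep_pick_uv_before pu pv xs : Some None \notin xs ->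
  sweep pick_uv (false, pu, pv) xs = ((sweep pick pu xs).1, (false, (sweep pick pu xs).2, pv)).
Proof. by elim: xs pu => //= x xs IH pu; rewrite inE negb_or eq_sym => /andP[/negbTE-> /IH->]. Qed.

Lemma sweep_pick_uv_after pu pv xs : Some None \notin xs ->
  sweep pick_uv (true, pu, pv) xs = ((sweep pick pv xs).1, (true, pu, (sweep pick pv xs).2)).
Proof. by elim: xs pv => //= x xs IH pv; rewrite inE negb_or eq_sym => /andP[/negbTE-> /IH->]. Qed.

Lemma sweep_read_uv u v k :
  sweep pick_uv (false, None, None) (read u k ++ Some None :: read v k) =
  (read u k.+1 ++ Some None :: read v k.+1, (true, ohead (drop k u), ohead (drop k v))).
Proof.
apply: sweep_cat; first by rewrite sweep_pick_uv_before ?separator_notin_read // sweep_pick.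
by rewrite /= sweep_pick_uv_after ?separator_notin_read // sweep_pick.
Qed.

End ReadingTransducer.

Section PatienceSortingMachine.
Variables (n : nat) (P : rel 'I_n).

Definition round_state : Type :=
  ((bool * option 'I_n * option 'I_n) * (ins_state n * ins_state n)) * bool.

Definition round_step :=
  monitor (par (@pick_uv n) (par (ins_step P) (ins_step P))) (fun c => c.2.1 == c.2.2).

Definition round_start (p : option 'I_n * option 'I_n) : round_state :=
  (((false, None, None), (omap inl p.1, omap inl p.2)), true).

(* The flag compares the tableau tracks as rewritten during the pass; they are
   complete once a pass reads no letter. *)
Definition round_verdict (s : round_state) : (option 'I_n * option 'I_n) + bool :=
  let: (((_, pu, pv), _), same) := s in
  if (pu, pv) is (None, None) then inr same else inl (pu, pv).

Definition ps_machine : TM (option 'I_n) :=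
  sweeping_machine round_step round_start round_verdict
    (fun x => (Some x, (None, None))) (None, None).

Variables u v : seq 'I_n.

Local Notation width := (size u + size v).+1.

Definition track (w : seq 'I_n) (j : nat) := pad width (enc_tab (ps_tab P (take j w))).

(* Before pass k, the first k letters of each word are read, the first k-1 are
   inserted into the tracks and the k-th is carried by the transducer state. *)
Definition cells k :=
  zip (read u k ++ Some None :: read v k) (zip (track u k.-1) (track v k.-1)).

Definition carry (w : seq 'I_n) k := if k is j.+1 then ohead (drop j w) else None.

Lemma size_input_track k : size (read u k ++ Some None :: read v k) = width.
Proof. by rewrite size_cat /= !size_read addnS. Qed.

Lemma size_track w j : size w < width -> size (track w j) = width.
Proof.
by move=> lt_w; rewrite size_pad // size_enc_tab size_flatten_ps_tab size_take; case: ltnP; lia.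
Qed.

Lemma sweep_track w k : size w < width ->
  sweep (ins_step P) (omap inl (carry w k)) (track w k.-1) = (track w k, None).
Proof.
move=> lt_w; case: k => [|j] /=; first by apply: sweep_fixed => -[].
case E: (drop j w) => [|a r] /=.
  have le_wj : size w <= j by rewrite -subn_eq0 -size_drop E.
  rewrite /track !take_oversize ?(leqW le_wj) //.
  by apply: sweep_fixed => -[].
rewrite /track (take_drop_cons E) ps_tab_rcons sweep_ins_pad // size_flatten_ps_tab size_take.
by case: (ltnP j (size w)) => // lt_jw; exact: ltn_trans lt_jw lt_w.
Qed.

Lemma sweep_round k :
  sweep round_step (round_start (carry u k, carry v k)) (cells k) =
  (cells k.+1,
   (((true, ohead (drop k u), ohead (drop k v)), (None, None)), track u k == track v k)).
Proof.
have lt_u : size u < width by rewrite ltnS leq_addr.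
have lt_v : size v < width by rewrite ltnS leq_addl.
have tracks : sweep (par (ins_step P) (ins_step P))
    (omap inl (carry u k), omap inl (carry v k)) (zip (track u k.-1) (track v k.-1)) =
    (zip (track u k) (track v k), (None, None)).
  by apply: sweep_par; rewrite ?size_track ?sweep_track.
rewrite /round_step (sweep_monitor _ _ (sweep_par _ (sweep_read_uv u v k) tracks)); last first.
  by rewrite size_input_track size_zip !size_track ?minnn.
rewrite (all_zip_snd (fun p => p.1 == p.2)) ?all_zip_eq ?size_track //.
by rewrite size_input_track size_zip !size_track ?minnn.
Qed.

Lemma verdict_round_final k :
  maxn (size u) (size v) <= k ->
  round_verdict (sweep round_step (round_start (carry u k, carry v k)) (cells k)).2 =
  inr (ps_tab P u == ps_tab P v).
Proof.
rewrite geq_max => /andP[le_uk le_vk].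
rewrite sweep_round /= !drop_oversize // /track !take_oversize //.
by rewrite eq_pad_enc_tab ?ps_tab_nonempty.
Qed.

Lemma verdict_round_next k :
  k < maxn (size u) (size v) ->
  round_verdict (sweep round_step (round_start (carry u k, carry v k)) (cells k)).2 =
  inl (carry u k.+1, carry v k.+1).
Proof.
rewrite ltnNge geq_max -!ohead_drop_eqNone sweep_round /=.
by case: (ohead (drop k u)) => [a|]; case: (ohead (drop k v)).
Qed.

Lemma rounds_ps_tab j k :
  maxn (size u) (size v) <= k + j ->
  rounds round_step round_start round_verdict j.+1 (carry u k, carry v k) (cells k) =
  Some (ps_tab P u == ps_tab P v).
Proof.
elim: j k => [|j IH] k le_max; case: (leqP (maxn (size u) (size v)) k) => [le_k | lt_k].
- by rewrite (rounds_stop _ (verdict_round_final le_k)).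
- by move: le_max; rewrite addn0 leqNgt lt_k.
- by rewrite (rounds_stop _ (verdict_round_final le_k)).
- by rewrite (rounds_next _ (verdict_round_next lt_k)) sweep_round IH // addSnnS.
Qed.

Lemma cells0 : cells 0 = [seq (Some x, (None, None)) | x <- map Some u ++ None :: map Some v].
Proof.
rewrite /cells.
have -> : track u 0.-1 = nseq width None by rewrite /track take0 /pad /=.
have -> : track v 0.-1 = nseq width None by rewrite /track take0 /pad /=.
rewrite -{2}(size_nseq width (None : option (item n))) zip_nseqr map_nseq.
rewrite -(size_input_track 0) zip_nseqr.
by rewrite /read !take0 !drop0 /= !map_cat /= -!map_comp.
Qed.

End PatienceSortingMachine.

Theorem ps_word_problem n (P : rel 'I_n) :
  word_problem_quadratic (fun u v : seq 'I_n => ps_tab P u == ps_tab P v).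
Proof.
exists (ps_machine P), 6 => u v.
have le_max : maxn (size u) (size v) <= size u + size v by rewrite geq_max leq_addr leq_addl.
apply: (sweeping_machine_decides (k := (maxn (size u) (size v)).+1)).
- by rewrite size_cat /= addnS.
- by rewrite -(cells0 P) (@rounds_ps_tab _ P u v _ 0).
- rewrite size_cat /= !size_map addnS.
  by move: le_max; set m := maxn _ _; nia.
Qed.

Lemma Rl_ps_tab n : @Rl n =1 ps_tab (fun a z => a < z).
Proof.
have ins_l_ps_ins a B : ins_l a B = ps_ins (fun a z => a < z) a B.
  by elim: B => //= -[|x c] B ->; rewrite /= ?ltnn.
by move=> w; rewrite /Rl /ps_tab; elim: w [::] => //= a w IH B; rewrite ins_l_ps_ins IH.
Qed.

Lemma Rr_ps_tab n : @Rr n =1 ps_tab (fun a z => a <= z).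
Proof. by []. Qed.

Theorem proposition6p8 (n : nat) :
  word_problem_quadratic (@rps_eq n) /\ word_problem_quadratic (@lps_eq n).
Proof.
split.
- have [M [c decides]] := ps_word_problem (fun a z : 'I_n => a <= z).
  by exists M, c => u v; rewrite /rps_eq !Rr_ps_tab.
- have [M [c decides]] := ps_word_problem (fun a z : 'I_n => a < z).
  by exists M, c => u v; rewrite /lps_eq !Rl_ps_tab.
Qed.
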